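(* Let $K$ be the $2$-uniform tiling of the plane whose vertex types are $[3^6]$ and $[3^2,4^1,12^1]$. If $X$ is a map on the torus that is a quotient $X=K/\Gamma$ of $K$, then the vertices of $X$ form at most $7$ orbits under ${\rm Aut}(X)$.
   Context: A map is a polyhedral map: a cellular embedding of a connected graph in a closed surface such that the intersection of any two distinct faces is empty, a single vertex, or a single edge. For a vertex $u$, the faces containing $u$ form a cyclic sequence (the face-cycle at $u$); if this cyclic sequence consists of consecutive blocks of $n_1$ $p_1$-gons, then $n_2$ $p_2$-gons, ..., then $n_k$ $p_k$-gons, with cyclically consecutive $p_i$ distinct, then $u$ is said to have type $[p_1^{n_1},\dots,p_k^{n_k}]$ (defined up to cyclic shift and reversal). A $2$-uniform tiling is an edge-to-edge tiling of the Euclidean plane $\mathbb{R}^2$ by regular polygons whose symmetry group has exactly two orbits on the set of vertices; viewed as a map on the plane, its vertices have (at most) two types, listed as $[W;Z]$. (Up to isomorphism there are exactly $20$ such tilings; there is exactly one with the vertex types named in the claim.) For a map $K$ on the plane, a quotient of $K$ on the torus is a map $X$ on the torus together with a polyhedral covering map $\eta:K\to X$ with $X=K/\Gamma$, where $\Gamma\le {\rm Aut}(K)$ is a subgroup acting without fixed vertices, edges or faces and $K/\Gamma$ is homeomorphic to the torus. ${\rm Aut}(X)$ denotes the automorphism group of the map $X$, acting on its vertex set $V(X)$. *)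

From Stdlib Require Import ZArith List.
From mathcomp Require Import all_boot.
Set Implicit Arguments.
Unset Strict Implicit.
Unset Printing Implicit Defensive.

(* Combinatorial maps.  A map on a vertex type V is given by its faces,     *)
(* each face being represented by its boundary cycle (a sequence of         *)
(* vertices).  The predicate [F : seq V -> Prop] holds for all the cyclic    *)
(* rotations and reversals of the boundary cycles of the faces.             *)

Definition adj_in (V : Type) (s : seq V) (u v : V) : Prop :=
  exists n t, rot n s = u :: v :: t.

Definition edge (V : Type) (F : seq V -> Prop) (u v : V) : Prop :=
  exists s, F s /\ adj_in s u v.

Definition faceset (V : Type) (F : seq V -> Prop) (A : V -> Prop) : Prop :=
  exists s, F s /\ forall x, A x <-> List.In x s.

Definition polyhedral (V : Type) (F : seq V -> Prop) : Prop :=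
  (forall s, F s -> List.NoDup s) /\
  forall s t, F s -> F t -> ~ (forall x, List.In x s <-> List.In x t) ->
    (forall x, ~ (List.In x s /\ List.In x t)) \/
    (exists u, forall x, (List.In x s /\ List.In x t) <-> x = u) \/
    (exists u v, edge F u v /\
       forall x, (List.In x s /\ List.In x t) <-> (x = u \/ x = v)).

Definition map_aut (V : Type) (F : seq V -> Prop) (f : V -> V) : Prop :=
  bijective f /\ forall s, F s <-> F (map f s).

Definition card_is (T : Type) (P : T -> Prop) (n : nat) : Prop :=
  exists l : list T, List.NoDup l /\ length l = n /\
    forall x, P x <-> List.In x l.

Definition orientable (V : Type) (F : seq V -> Prop) : Prop :=
  exists O : seq V -> Prop,
    (forall t, O t -> F t) /\
    (forall t n, O t -> O (rot n t)) /\
    (forall t, F t -> (O t \/ O (rev t)) /\ ~ (O t /\ O (rev t))) /\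
    (forall t t' u v, O t -> O t' -> adj_in t u v -> adj_in t' u v ->
        exists n, t' = rot n t).

(* A finite map on the torus: finitely many vertices, edges, faces,       *)
(* orientable and of Euler characteristic V - E + F = 0.  Edges are       *)
(* counted through darts (ordered adjacent pairs), #darts = 2 E.           *)
Definition torus_map (V : Type) (F : seq V -> Prop) : Prop :=
  orientable F /\
  exists nV nD nF,
    card_is (fun _ : V => True) nV /\
    card_is (fun d : V * V => edge F d.1 d.2) nD /\
    card_is (faceset F) nF /\
    nD = 2 * (nV + nF).

(* Dodecagons (side 1) are centred at the points of the lattice             *)
(* Z a1 + Z a2, a1 = (3+sqrt 3)(1,0), a2 = (3+sqrt 3)(1/2, sqrt 3/2).        *)
(* A vertex is (i, j, k): the translate by i a1 + j a2 of the k-th          *)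
(* representative: k < 12 is the vertex of the dodecagon centred at 0 at    *)
(* angle 15 + 30 k degrees; k = 12, 13 are the points (a1+a2)/3 and         *)
(* 2(a1+a2)/3 (the vertices of type [3^6]).  The faces are the translates   *)
(* of the 16 faces below (1 dodecagon, 3 squares, 12 triangles).            *)

Definition VK : Type := (Z * Z * 'I_14)%type.

Definition vx (a b : Z) (k : nat) : VK := (a, b, @inord 13 k).

Definition base_faces : seq (seq VK) :=
  [:: [:: vx 0 0 0; vx 0 0 1; vx 0 0 2; vx 0 0 3; vx 0 0 4; vx 0 0 5; vx 0 0 6; vx 0 0 7; vx 0 0 8; vx 0 0 9; vx 0 0 10; vx 0 0 11];
   [:: vx 0 0 11; vx 0 0 0; vx 1 0 5; vx 1 0 6];
   [:: vx 0 0 1; vx 0 0 2; vx 0 1 7; vx 0 1 8];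
   [:: vx 0 0 3; vx 0 0 4; vx (-1) 1 9; vx (-1) 1 10];
   [:: vx 0 0 12; vx 0 0 0; vx 1 0 5];
   [:: vx 0 0 12; vx 1 0 5; vx 1 0 4];
   [:: vx 0 0 12; vx 1 0 4; vx 0 1 9];
   [:: vx 0 0 12; vx 0 1 9; vx 0 1 8];
   [:: vx 0 0 12; vx 0 1 8; vx 0 0 1];
   [:: vx 0 0 12; vx 0 0 1; vx 0 0 0];
   [:: vx 0 0 13; vx 0 1 10; vx 1 0 3];
   [:: vx 0 0 13; vx 1 0 3; vx 1 0 2];
   [:: vx 0 0 13; vx 1 0 2; vx 1 1 7];
   [:: vx 0 0 13; vx 1 1 7; vx 1 1 6];
   [:: vx 0 0 13; vx 1 1 6; vx 0 1 11];
   [:: vx 0 0 13; vx 0 1 11; vx 0 1 10]].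

Definition shift (x y : Z) (v : VK) : VK :=
  ((v.1.1 + x)%Z, (v.1.2 + y)%Z, v.2).

Definition FK (s : seq VK) : Prop :=
  exists f, List.In f base_faces /\ exists (x y : Z) (n : nat),
    s = rot n (map (shift x y) f) \/ s = rot n (rev (map (shift x y) f)).

Definition aut_subgroup (Gamma : (VK -> VK) -> Prop) : Prop :=
  Gamma id /\
    (forall g, Gamma g -> map_aut FK g) /\
    (forall g h, Gamma g -> Gamma h -> Gamma (g \o h)) /\
    (forall g, Gamma g -> exists h, Gamma h /\ cancel g h /\ cancel h g).

Definition acts_freely (Gamma : (VK -> VK) -> Prop) : Prop :=
  (forall g v, Gamma g -> g v = v -> g = id) /\
    (forall g u v, Gamma g -> edge FK u v -> g u = v -> g v = u -> g = id) /\
    (forall g s, Gamma g -> FK s ->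
     (forall x, List.In x s -> List.In (g x) s) -> g = id).

Definition orbit (Gamma : (VK -> VK) -> Prop) (v : VK) : VK -> Prop :=
  fun w => exists g, Gamma g /\ g v = w.

Definition VX (Gamma : (VK -> VK) -> Prop) : Type :=
  { A : VK -> Prop | exists v, A = orbit Gamma v }.

Definition proj (Gamma : (VK -> VK) -> Prop) (v : VK) : VX Gamma :=
  exist _ (orbit Gamma v) (ex_intro _ v erefl).

Definition FX (Gamma : (VK -> VK) -> Prop) (t : seq (VX Gamma)) : Prop :=
  exists s, FK s /\ t = map (proj Gamma) s.
Arguments FX Gamma t : clear implicits.
Arguments proj Gamma v : clear implicits.

From Pilot Require Import Defs.
From Stdlib Require Import ZArith List Lia.
From Stdlib Require Import FunctionalExtensionality PropExtensionality ProofIrrelevance ClassicalEpsilon.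
From mathcomp Require Import all_boot ssrZ zify.
Set Implicit Arguments.
Unset Strict Implicit.
Unset Printing Implicit Defensive.

(* Every automorphism of K is determined by the image of one dodecagon, since
   the faces around a pointwise fixed dodecagon are forced one after the other;
   so it has the form v |-> t + rho^m sigma^e v, with t a lattice translation,
   rho the rotation by 60 degrees about a dodecagon centre and sigma a
   reflection.  A deck group Gamma of an orientable quotient contains no
   reflection, which would reverse the orientation that X induces coherently on
   all dodecagons; acting freely, it contains no rotation either, as every
   rotation of K fixes a vertex, a square or a dodecagon.  Hence Gamma consists
   of translations, and is normalised by all translations and by the half-turn
   rho^3, which therefore descend to automorphisms of X.  Under these the 14
   translation classes of vertices of K fall into 7 orbits. *)

(* The imports shadow [Defs.shift] by [Zpower.shift] and [Defs.orbit] by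
   [fingraph.orbit]. *)
Local Notation shift := Defs.shift.
Local Notation orbit := Defs.orbit.

Lemma inP (T : eqType) (x : T) s : reflect (List.In x s) (x \in s).
Proof.
elim: s => [|y s IH]; first by constructor.
rewrite in_cons; apply: (iffP orP) => [[/eqP ->|/IH]|[->|/IH]] /=; auto.
Qed.

Lemma rot_exists_le (T : Type) n (s : seq T) : exists2 m, m <= size s & rot n s = rot m s.
Proof.
case: (leqP (size s) n) => h; first by exists 0; rewrite ?rot0 ?rot_oversize.
by exists n => //; apply: ltnW.
Qed.

Lemma rot_rot_exists (T : Type) m n (s : seq T) : exists k, rot m (rot n s) = rot k s.
Proof.
have [n' hn ->] := rot_exists_le n s.
have [m' hm ->] := rot_exists_le m (rot n' s).
rewrite size_rot in hm; rewrite rot_add_mod //; by eexists.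
Qed.

Lemma adj_in_map (T U : Type) (f : T -> U) s u v :
  adj_in s u v -> adj_in (map f s) (f u) (f v).
Proof. by move=> [n [t e]]; exists n, (map f t); rewrite -map_rot e. Qed.

Lemma adj_in_rev (T : Type) (s : seq T) u v : adj_in s u v -> adj_in (rev s) v u.
Proof.
move=> [n [t e]].
have e2 : rotr n (rev s) = rev t ++ [:: v; u].
  by rewrite -rev_rot e /= !rev_cons -!cats1 -catA.
have [k ek] := rot_rot_exists (size (rev t)) (size (rev s) - n) (rev s).
by exists k, (rev t); rewrite -ek -[rot _ (rev s)]/(rotr n (rev s)) e2 rot_size_cat.
Qed.

Definition adjacentb (T : eqType) (s : seq T) u v :=
  has (fun n => take 2 (rot n s) == [:: u; v]) (iota 0 (size s)).

Lemma adjacentb_adj_in (T : eqType) (s : seq T) u v : adjacentb s u v -> adj_in s u v.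
Proof.
move/hasP=> [n _ /eqP e]; exists n, (drop 2 (rot n s)).
by rewrite -[LHS](cat_take_drop 2) e.
Qed.

Section MapAut.
Variables (V : Type) (F : seq V -> Prop).

Lemma map_aut_face f s : map_aut F f -> F s -> F (map f s).
Proof. by move=> [_ h] /h. Qed.

Lemma map_aut_inj f : map_aut F f -> injective f.
Proof. by move=> [/bij_inj]. Qed.

Lemma map_aut_can f f' : cancel f f' -> cancel f' f ->
  (forall s, F s -> F (map f s)) -> (forall s, F s -> F (map f' s)) -> map_aut F f.
Proof.
move=> c1 c2 hf hf'; split; first by exists f'.
move=> s; split; first exact: hf.
by move/hf'; rewrite -map_comp (eq_map c1) map_id.
Qed.

Lemma map_aut_id : map_aut F id.
Proof. by apply: (@map_aut_can _ id) => // s; rewrite map_id. Qed.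

Lemma map_aut_comp f g : map_aut F f -> map_aut F g -> map_aut F (f \o g).
Proof.
move=> [bf hf] [bg hg]; split; first exact: bij_comp.
by move=> s; rewrite map_comp -hf -hg.
Qed.

Lemma map_aut_inv f : map_aut F f ->
  exists f', [/\ map_aut F f', cancel f f' & cancel f' f].
Proof.
move=> [[f' c1 c2] hf]; exists f'; split => //.
apply: (map_aut_can c2 c1) => s; last by move/hf.
by move=> hs; apply/hf; rewrite -map_comp (eq_map c2) map_id.
Qed.

Lemma map_iter_face f n : (forall s, F s -> F (map f s)) ->
  forall s, F s -> F (map (iter n f) s).
Proof.
move=> hf; elim: n => [|n IH] s hs; first by rewrite map_id.
have -> : map (iter n.+1 f) s = map f (map (iter n f) s) by rewrite -map_comp.
exact/hf/IH.
Qed.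

Lemma map_aut_finite_order f n : iter n.+1 f =1 id ->
  (forall s, F s -> F (map f s)) -> map_aut F f.
Proof.
move=> hn hf; apply: (@map_aut_can f (iter n f) _ _ hf (map_iter_face n hf)) => v.
  by rewrite -iterSr hn.
by rewrite -iterS hn.
Qed.

Lemma map_aut_iter f n : map_aut F f -> map_aut F (iter n f).
Proof.
move=> hf; elim: n => [|n IH]; first exact: map_aut_id.
exact: map_aut_comp hf IH.
Qed.

End MapAut.

Lemma shiftD a b x y v : shift a b (shift x y v) = shift (x + a) (y + b) v.
Proof. by case: v => [[p q] k]; rewrite /shift /=; congr (_,_,_); lia. Qed.

Lemma shift0 : shift 0 0 =1 id.
Proof. by case=> [[p q] k]; rewrite /shift /=; congr (_,_,_); lia. Qed.

Lemma shiftK x y : cancel (shift x y) (shift (- x) (- y)).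
Proof. by move=> v; rewrite shiftD -[RHS]shift0; congr shift; lia. Qed.

Lemma shiftNK x y : cancel (shift (- x) (- y)) (shift x y).
Proof. by move=> v; rewrite shiftD -[RHS]shift0; congr shift; lia. Qed.

Lemma map_shiftD a b x y (s : seq VK) :
  map (shift a b) (map (shift x y) s) = map (shift (x + a) (y + b)) s.
Proof. by rewrite -map_comp; apply: eq_map => v /=; apply: shiftD. Qed.

Lemma map_shift0 (s : seq VK) : map (shift 0 0) s = s.
Proof. by rewrite (eq_map shift0) map_id. Qed.

Lemma FK_rot n s : FK s -> FK (rot n s).
Proof.
move=> [f [hf [x [y [m e]]]]]; exists f; split => //; exists x, y.
case: e => ->.
  by have [k ->] := rot_rot_exists n m (map (shift x y) f); exists k; left.
by have [k ->] := rot_rot_exists n m (rev (map (shift x y) f)); exists k; right.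
Qed.

Lemma FK_rev s : FK s -> FK (rev s).
Proof.
move=> [f [hf [x [y [m [->|->]]]]]]; exists f; split => //; exists x, y.
  by rewrite rev_rot; eexists; right.
by rewrite rev_rot revK; eexists; left.
Qed.

Lemma FK_shift a b s : FK s -> FK (map (shift a b) s).
Proof.
move=> [f [hf [x [y [m e]]]]]; exists f; split => //.
by exists (x + a)%Z, (y + b)%Z, m; case: e => ->; rewrite map_rot ?map_rev map_shiftD; auto.
Qed.

Lemma map_aut_shift x y : map_aut FK (shift x y).
Proof. exact: (map_aut_can (shiftK x y) (shiftNK x y) (@FK_shift x y) (@FK_shift _ _)). Qed.

(* [inord] decides its bound with the opaque [idP], on which [vm_compute] gets
   stuck; [vxm] is the computable copy of [vx] used in all the finite checks. *)
Definition ord14 (k : nat) : 'I_14 := Ordinal (ltn_pmod k (isT : 0 < 14)).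
Definition vxm (a b : Z) (k : nat) : VK := (a, b, ord14 k).

Lemma ord14_val (k : 'I_14) : ord14 k = k.
Proof. by apply: val_inj; rewrite /= modn_small. Qed.

Lemma vertex_decomp (v : VK) : v = shift v.1.1 v.1.2 (vxm 0 0 v.2).
Proof. by case: v => [[a b] k]; rewrite /shift /vxm ord14_val /=; congr (_,_,_); lia. Qed.

Definition base_faces_vxm : seq (seq VK) :=
  [:: [:: vxm 0 0 0; vxm 0 0 1; vxm 0 0 2; vxm 0 0 3; vxm 0 0 4; vxm 0 0 5; vxm 0 0 6; vxm 0 0 7; vxm 0 0 8; vxm 0 0 9; vxm 0 0 10; vxm 0 0 11];
   [:: vxm 0 0 11; vxm 0 0 0; vxm 1 0 5; vxm 1 0 6];
   [:: vxm 0 0 1; vxm 0 0 2; vxm 0 1 7; vxm 0 1 8];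
   [:: vxm 0 0 3; vxm 0 0 4; vxm (-1) 1 9; vxm (-1) 1 10];
   [:: vxm 0 0 12; vxm 0 0 0; vxm 1 0 5];
   [:: vxm 0 0 12; vxm 1 0 5; vxm 1 0 4];
   [:: vxm 0 0 12; vxm 1 0 4; vxm 0 1 9];
   [:: vxm 0 0 12; vxm 0 1 9; vxm 0 1 8];
   [:: vxm 0 0 12; vxm 0 1 8; vxm 0 0 1];
   [:: vxm 0 0 12; vxm 0 0 1; vxm 0 0 0];
   [:: vxm 0 0 13; vxm 0 1 10; vxm 1 0 3];
   [:: vxm 0 0 13; vxm 1 0 3; vxm 1 0 2];
   [:: vxm 0 0 13; vxm 1 0 2; vxm 1 1 7];
   [:: vxm 0 0 13; vxm 1 1 7; vxm 1 1 6];
   [:: vxm 0 0 13; vxm 1 1 6; vxm 0 1 11];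
   [:: vxm 0 0 13; vxm 0 1 11; vxm 0 1 10]].

Lemma vx_vxm a b k : k < 14 -> vx a b k = vxm a b k.
Proof. by move=> hk; rewrite /vx /vxm; congr (_,_,_); apply: val_inj; rewrite /= inordK // modn_small. Qed.

Lemma base_facesE : base_faces = base_faces_vxm.
Proof. by rewrite /base_faces !vx_vxm. Qed.

Definition oriented_faces := base_faces_vxm ++ map rev base_faces_vxm.

Lemma FK_oriented s :
  FK s <-> exists f, f \in oriented_faces /\ exists x y m, s = rot m (map (shift x y) f).
Proof.
rewrite /FK base_facesE; split.
  move=> [f [/inP hf [x [y [m [->|->]]]]]].
    by exists f; split; [rewrite mem_cat hf | exists x, y, m].
  exists (rev f); split; first by rewrite mem_cat map_f ?orbT.
  by exists x, y, m; rewrite map_rev.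
move=> [f [hf [x [y [m ->]]]]].
move: hf; rewrite mem_cat => /orP [/inP hf|/mapP [g /inP hg ->]].
  by exists f; split => //; exists x, y, m; left.
by exists g; split => //; exists x, y, m; right; rewrite map_rev.
Qed.

Definition vdef : VK := vxm 0 0 0.

Definition faces_from0 (k : 'I_14) : seq (seq VK) :=
  flatten [seq [seq rot i (map (shift (- (nth vdef f i).1.1) (- (nth vdef f i).1.2)) f)
               | i <- iota 0 (size f) & (nth vdef f i).2 == k] | f <- oriented_faces].

Definition faces_from (u : VK) := map (map (shift u.1.1 u.1.2)) (faces_from0 u.2).

Lemma mem_faces_from u r : FK (u :: r) -> u :: r \in faces_from u.
Proof.
move/FK_oriented=> [f [hf [x [y [m e]]]]].
have [m' hm e'] := rot_exists_le m (map (shift x y) f).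
rewrite e' in e.
have hsz : 0 < size f by move: (congr1 size e); rewrite size_rot size_map; case: (size f).
have [i hi ei] : exists2 i, i < size f & u :: r = rot i (map (shift x y) f).
  move: hm; rewrite size_map leq_eqVlt => /orP [/eqP em|hm]; last by exists m'.
  by exists 0 => //; rewrite rot0 e em -(size_map (shift x y)) rot_size.
set z := nth vdef f i.
have hu : u = shift x y z.
  move: (congr1 (head vdef) ei) => /= ->.
  by rewrite /rot (drop_nth vdef) ?size_map //= (nth_map vdef).
apply/mapP; exists (rot i (map (shift (- z.1.1) (- z.1.2)) f)).
  apply/flatten_mapP; exists f => //.
  by apply/mapP; exists i => //; rewrite mem_filter mem_iota /= add0n hi andbT hu.
rewrite ei map_rot map_shiftD hu /z.
by case: (nth vdef f i) => [[p q] k] /=; congr (rot i (map (shift _ _) f)); lia.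
Qed.

Lemma faces_from_FK u l : l \in faces_from u -> FK l.
Proof.
move=> /mapP [l' /flatten_mapP [f hf /mapP [i _ ->]] ->].
rewrite map_rot map_shiftD; apply/FK_oriented.
by exists f; split => //; do 3 eexists.
Qed.

Lemma faces_from_shift a b u :
  faces_from (shift a b u) = map (map (shift a b)) (faces_from u).
Proof.
rewrite /faces_from -map_comp; case: u => [[p q] k] /=.
by apply: eq_map => l /=; rewrite map_shiftD; congr (map (shift _ _) l); lia.
Qed.

(** * Rigidity *)

Definition forced (S : seq VK) (u v : VK) (r : seq VK) : bool :=
  [&& u \in S, v \in S, u :: v :: r \in faces_from u &
   all (fun l => if l is u' :: v' :: r' then ((u' == u) && (v' == v)) ==>
                   ((r' == r) || all (fun z => z \in S) r') else true) (faces_from u)].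

Lemma fixes_map (h : VK -> VK) s : map h s = s -> {in s, forall z, h z = z}.
Proof.
elim: s => //= a s IH [e1 e2] z; rewrite in_cons => /orP [/eqP ->|hz] //.
exact: IH.
Qed.

Lemma fixes_forced h S u v r : map_aut FK h -> {in S, forall z, h z = z} ->
  forced S u v r -> {in S ++ r, forall z, h z = z}.
Proof.
move=> ha hS /and4P [hu hv hin /allP hall].
have : FK (map h (u :: v :: r)) := map_aut_face ha (faces_from_FK hin).
rewrite /= (hS _ hu) (hS _ hv) => /mem_faces_from /hall.
rewrite !eqxx /= => hr w; rewrite mem_cat => /orP [/hS //|]; apply: fixes_map.
case/orP: hr => [/eqP //|/allP hsub].
(* [h] fixes [S], which contains [map h r]; injectivity of [h] gives [map h r = r]. *)
apply: (inj_map (map_aut_inj ha)); rewrite -[RHS]map_id.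
by apply/eq_in_map => z hz; apply: hS; apply: hsub.
Qed.

Fixpoint forced_chain (S : seq VK) (steps : seq (VK * VK * seq VK)) : bool :=
  if steps is (u, v, r) :: steps' then forced S u v r && forced_chain (S ++ r) steps'
  else true.

Fixpoint chain_closure (S : seq VK) (steps : seq (VK * VK * seq VK)) : seq VK :=
  if steps is (_, _, r) :: steps' then chain_closure (S ++ r) steps' else S.

Lemma fixes_chain h S steps : map_aut FK h -> {in S, forall z, h z = z} ->
  forced_chain S steps -> {in chain_closure S steps, forall z, h z = z}.
Proof.
move=> ha; elim: steps S => //= [[[u v] r] steps IH] S hS /andP [h1 h2].
by apply: IH => //; apply: fixes_forced h1.
Qed.

Definition dodecagon : seq VK := [seq vxm 0 0 i | i <- iota 0 12].
Definition dodecagon_at x y := map (shift x y) dodecagon.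
Definition vertices_36 : seq VK := [:: vxm 0 0 12; vxm 0 0 13].

Lemma dodecagon_atD x y a b :
  dodecagon_at (x + a) (y + b) = map (shift x y) (dodecagon_at a b).
Proof. by rewrite /dodecagon_at map_shiftD; congr (map (shift _ _) dodecagon); lia. Qed.

Definition dodecagon_steps : seq (VK * VK * seq VK) :=
[:: (vxm 0 0 0, vxm 0 0 11, [:: vxm 1 0 6; vxm 1 0 5]);
 (vxm 0 0 0, vxm 1 0 5, [:: vxm 0 0 12]);
 (vxm 0 0 1, vxm 0 0 2, [:: vxm 0 1 7; vxm 0 1 8]);
 (vxm 0 0 2, vxm 0 1 7, [:: vxm (-1) 0 13]);
 (vxm 0 0 3, vxm 0 0 4, [:: vxm (-1) 1 9; vxm (-1) 1 10]);
 (vxm 0 0 4, vxm (-1) 1 9, [:: vxm (-1) 0 12]);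
 (vxm 0 0 5, vxm 0 0 6, [:: vxm (-1) 0 11; vxm (-1) 0 0]);
 (vxm 0 0 6, vxm (-1) 0 11, [:: vxm (-1) (-1) 13]);
 (vxm 0 0 7, vxm 0 0 8, [:: vxm 0 (-1) 1; vxm 0 (-1) 2]);
 (vxm 0 0 8, vxm 0 (-1) 1, [:: vxm 0 (-1) 12]);
 (vxm 0 0 9, vxm 0 0 10, [:: vxm 1 (-1) 3; vxm 1 (-1) 4]);
 (vxm 0 0 10, vxm 1 (-1) 3, [:: vxm 0 (-1) 13]);
 (vxm 1 0 6, vxm 0 (-1) 13, [:: vxm 1 0 7]);
 (vxm 1 0 6, vxm 1 0 7, [:: vxm 1 0 8; vxm 1 0 9; vxm 1 0 10; vxm 1 0 11; vxm 1 0 0; vxm 1 0 1; vxm 1 0 2; vxm 1 0 3; vxm 1 0 4; vxm 1 0 5]);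
 (vxm 0 0 12, vxm 1 0 4, [:: vxm 0 1 9]);
 (vxm 0 1 7, vxm 0 1 8, [:: vxm 0 1 9; vxm 0 1 10; vxm 0 1 11; vxm 0 1 0; vxm 0 1 1; vxm 0 1 2; vxm 0 1 3; vxm 0 1 4; vxm 0 1 5; vxm 0 1 6]);
 (vxm (-1) 0 13, vxm 0 1 6, [:: vxm (-1) 1 11]);
 (vxm (-1) 1 9, vxm (-1) 1 10, [:: vxm (-1) 1 11; vxm (-1) 1 0; vxm (-1) 1 1; vxm (-1) 1 2; vxm (-1) 1 3; vxm (-1) 1 4; vxm (-1) 1 5; vxm (-1) 1 6; vxm (-1) 1 7; vxm (-1) 1 8]);
 (vxm (-1) 0 12, vxm (-1) 1 8, [:: vxm (-1) 0 1]);
 (vxm (-1) 0 11, vxm (-1) 0 0, [:: vxm (-1) 0 1; vxm (-1) 0 2; vxm (-1) 0 3; vxm (-1) 0 4; vxm (-1) 0 5; vxm (-1) 0 6; vxm (-1) 0 7; vxm (-1) 0 8; vxm (-1) 0 9; vxm (-1) 0 10]);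
 (vxm (-1) (-1) 13, vxm (-1) 0 10, [:: vxm 0 (-1) 3]);
 (vxm 0 (-1) 1, vxm 0 (-1) 2, [:: vxm 0 (-1) 3; vxm 0 (-1) 4; vxm 0 (-1) 5; vxm 0 (-1) 6; vxm 0 (-1) 7; vxm 0 (-1) 8; vxm 0 (-1) 9; vxm 0 (-1) 10; vxm 0 (-1) 11; vxm 0 (-1) 0]);
 (vxm 0 (-1) 12, vxm 0 (-1) 0, [:: vxm 1 (-1) 5]);
 (vxm 1 (-1) 3, vxm 1 (-1) 4, [:: vxm 1 (-1) 5; vxm 1 (-1) 6; vxm 1 (-1) 7; vxm 1 (-1) 8; vxm 1 (-1) 9; vxm 1 (-1) 10; vxm 1 (-1) 11; vxm 1 (-1) 0; vxm 1 (-1) 1; vxm 1 (-1) 2]);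
 (vxm 1 0 8, vxm 1 (-1) 1, [:: vxm 1 (-1) 12]);
 (vxm 1 0 9, vxm 1 0 10, [:: vxm 2 (-1) 3; vxm 2 (-1) 4]);
 (vxm 1 0 10, vxm 2 (-1) 3, [:: vxm 1 (-1) 13]);
 (vxm 1 0 11, vxm 1 0 0, [:: vxm 2 0 5; vxm 2 0 6]);
 (vxm 1 0 0, vxm 2 0 5, [:: vxm 1 0 12]);
 (vxm 1 0 1, vxm 1 0 2, [:: vxm 1 1 7; vxm 1 1 8]);
 (vxm 1 0 2, vxm 1 1 7, [:: vxm 0 0 13])].

Lemma dodecagon_steps_ok :
  forced_chain dodecagon dodecagon_steps &&
  all (fun z => z \in chain_closure dodecagon dodecagon_steps)
    (dodecagon_at 1 0 ++ dodecagon_at (-1) 0 ++ dodecagon_at 0 1 ++ dodecagon_at 0 (-1)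
     ++ vertices_36).
Proof. by vm_compute. Qed.

Lemma fixes_neighbours h x y : map_aut FK h -> {in dodecagon_at x y, forall z, h z = z} ->
  {in dodecagon_at (x + 1) y ++ dodecagon_at (x - 1) y ++ dodecagon_at x (y + 1)
      ++ dodecagon_at x (y - 1) ++ map (shift x y) vertices_36, forall z, h z = z}.
Proof.
move=> ha hD.
pose h' := shift (- x) (- y) \o h \o shift x y.
have ha' : map_aut FK h'.
  by do 2?apply: map_aut_comp => //; apply: map_aut_shift.
have hD' : {in dodecagon, forall z, h' z = z}.
  by move=> z hz; rewrite /h' /= hD ?shiftK //; apply: map_f.
have /andP [hc /allP hs] := dodecagon_steps_ok.
have hfix := fixes_chain ha' hD' hc.
have -> : dodecagon_at (x + 1) y ++ dodecagon_at (x - 1) y ++ dodecagon_at x (y + 1)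
      ++ dodecagon_at x (y - 1) ++ map (shift x y) vertices_36
    = map (shift x y) (dodecagon_at 1 0 ++ dodecagon_at (-1) 0 ++ dodecagon_at 0 1
      ++ dodecagon_at 0 (-1) ++ vertices_36).
  by rewrite !map_cat -!dodecagon_atD; repeat congr (_ ++ _); congr dodecagon_at; lia.
move=> _ /mapP [z /hs /hfix hz ->].
by apply: (can_inj (shiftNK x y)); rewrite shiftK.
Qed.

Lemma Z_ind_pm (P : Z -> Prop) : P 0%Z -> (forall x, P x -> P (x + 1)%Z) ->
  (forall x, P x -> P (x - 1)%Z) -> forall x, P x.
Proof. exact: Z.peano_ind. Qed.

Lemma aut_fixing_dodecagon h : map_aut FK h -> {in dodecagon, forall z, h z = z} -> h =1 id.
Proof.
move=> ha h0.
have hnb x y := @fixes_neighbours h x y ha.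
have hall x y : {in dodecagon_at x y, forall z, h z = z}.
  have hx : forall x, {in dodecagon_at x 0, forall z, h z = z}.
    apply: Z_ind_pm; first by rewrite /dodecagon_at map_shift0.
      by move=> {}x /hnb hx z hz; apply: hx; rewrite mem_cat hz.
    by move=> {}x /hnb hx z hz; apply: hx; rewrite !mem_cat hz orbT.
  move: y; apply: Z_ind_pm => // y /hnb hy z hz; apply: hy; rewrite !mem_cat hz ?orbT //.
move=> [[a b] k]; rewrite (vertex_decomp (a, b, k)) /=.
have [hk|hk] := ltnP k 12.
  by apply: hall; apply: map_f; apply/mapP; exists (val k); rewrite ?mem_iota.
apply: (hnb a b (hall a b)); rewrite !mem_cat map_f ?orbT //.
case: k hk => m hm /= hk; have [->|->] : m = 12 \/ m = 13 by lia.
  by rewrite inE eqxx.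
by rewrite !inE eqxx orbT.
Qed.

Lemma aut_eq_on_dodecagon g1 g2 : map_aut FK g1 -> map_aut FK g2 ->
  {in dodecagon, g1 =1 g2} -> g1 =1 g2.
Proof.
move=> h1 h2 hag.
have [f' [ha' c1 c2]] := map_aut_inv h2.
have hfix : {in dodecagon, forall z, (f' \o g1) z = z} by move=> z hz /=; rewrite hag // c1.
by move=> v; rewrite -[LHS]c2; apply: congr1; apply: (aut_fixing_dodecagon (map_aut_comp ha' h1) hfix).
Qed.

(** * The automorphisms of K *)

(* [rho] is the rotation by 60 degrees about the centre of the dodecagon at the
   origin, acting on the lattice by a1 |-> a2, a2 |-> a2 - a1; [sigma] is the
   reflection of that dodecagon exchanging its vertices k and 11 - k. *)
Definition rho (v : VK) : VK :=
  let: (a, b, k) := v in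
  if val k < 12 then ((- b)%Z, (a + b)%Z, ord14 ((val k + 2) %% 12))
  else if val k == 12 then ((- b - 1)%Z, (a + b)%Z, ord14 13)
  else ((- b - 1)%Z, (a + b + 1)%Z, ord14 12).

Definition sigma (v : VK) : VK :=
  let: (a, b, k) := v in
  if val k < 12 then ((a + b)%Z, (- b)%Z, ord14 (11 - val k))
  else if val k == 12 then ((a + b)%Z, (- b - 1)%Z, ord14 13)
  else ((a + b + 1)%Z, (- b - 1)%Z, ord14 12).

Definition lattice_rot (p : Z * Z) : Z * Z := ((- p.2)%Z, (p.1 + p.2)%Z).

Lemma rho_shift x y v : rho (shift x y v) = shift (- y) (x + y) (rho v).
Proof.
case: v => [[a b] k]; rewrite /rho /shift /=.
by case: ifP => _; last case: ifP => _; congr (_,_,_); rewrite /=; lia.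
Qed.

Lemma sigma_shift x y v : sigma (shift x y v) = shift (x + y) (- y) (sigma v).
Proof.
case: v => [[a b] k]; rewrite /sigma /shift /=.
by case: ifP => _; last case: ifP => _; congr (_,_,_); rewrite /=; lia.
Qed.

Lemma iter_rho_shift m x y v : iter m rho (shift x y v) =
  shift (iter m lattice_rot (x, y)).1 (iter m lattice_rot (x, y)).2 (iter m rho v).
Proof. by elim: m => //= m ->; rewrite rho_shift; case: (iter m lattice_rot (x, y)). Qed.

Lemma rho6 : iter 6 rho =1 id.
Proof.
have /allP h : all (fun k => iter 6 rho (vxm 0 0 k) == vxm 0 0 k) (iota 0 14).
  by vm_compute.
move=> v; rewrite [in LHS](vertex_decomp v) iter_rho_shift.
rewrite (eqP (h v.2 _)) ?mem_iota //= [in RHS](vertex_decomp v).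
by case: v => [[a b] k] /=; congr shift; lia.
Qed.

Lemma sigmaK : involutive sigma.
Proof.
have /allP h : all (fun k => sigma (sigma (vxm 0 0 k)) == vxm 0 0 k) (iota 0 14).
  by vm_compute.
move=> v; rewrite [in LHS](vertex_decomp v) !sigma_shift.
rewrite (eqP (h v.2 _)) ?mem_iota //= [in RHS](vertex_decomp v).
by case: v => [[a b] k] /=; congr shift; lia.
Qed.

Lemma FK_map_equivariant (f : VK -> VK) (L : Z -> Z -> Z * Z) :
  (forall x y v, f (shift x y v) = shift (L x y).1 (L x y).2 (f v)) ->
  all (fun t => map f t \in faces_from (head vdef (map f t))) oriented_faces ->
  forall s, FK s -> FK (map f s).
Proof.
move=> hL /allP hb s /FK_oriented [t [ht [x [y [m ->]]]]].
rewrite map_rot -map_comp.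
have -> : map (f \o shift x y) t = map (shift (L x y).1 (L x y).2) (map f t).
  by rewrite -map_comp; apply: eq_map => v /=; rewrite hL.
apply/FK_rot/FK_shift; move: (hb t ht).
by case: (map f t) => [|z r]; [rewrite /faces_from; vm_compute | apply: faces_from_FK].
Qed.

Lemma map_aut_rho : map_aut FK rho.
Proof.
apply: (@map_aut_finite_order _ _ _ 5 rho6).
by apply: (@FK_map_equivariant _ (fun x y => (- y, x + y)%Z) rho_shift); vm_compute.
Qed.

Lemma map_aut_sigma : map_aut FK sigma.
Proof.
apply: (@map_aut_finite_order _ _ _ 1 sigmaK).
by apply: (@FK_map_equivariant _ (fun x y => (x + y, - y)%Z) sigma_shift); vm_compute.
Qed.

Definition dihedral (m : nat) (e : bool) (v : VK) : VK :=
  iter m rho (if e then sigma v else v).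

Lemma map_aut_dihedral m e : map_aut FK (dihedral m e).
Proof.
case: e; last exact: map_aut_iter map_aut_rho.
exact: map_aut_comp (map_aut_iter m map_aut_rho) map_aut_sigma.
Qed.

Definition dihedral_params : seq (nat * bool) :=
  [seq (m, e) | m <- iota 0 6, e <- [:: false; true]].

Definition square0 : seq VK := [:: vxm 0 0 11; vxm 0 0 0; vxm 1 0 5; vxm 1 0 6].

Lemma FK_dodecagon : FK dodecagon.
Proof. by apply: (@faces_from_FK (vxm 0 0 0)); vm_compute. Qed.

Lemma FK_square0 : FK square0.
Proof. by apply: (@faces_from_FK (vxm 0 0 11)); vm_compute. Qed.

Lemma square_after_dodecagon g : map_aut FK g ->
  has (fun q => (size q == 4) && (nth vdef q 1 == g (vxm 0 0 0)))
    (faces_from (g (vxm 0 0 11))).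
Proof.
move=> ha; apply/hasP; exists (map g square0); last by rewrite /= !eqxx.
exact: mem_faces_from (map_aut_face ha FK_square0).
Qed.

(* Each dodecagonal cycle [l] starting in the cell [(0, 0)] is an image of the
   base dodecagon under some [dihedral m e], unless no square follows [l] along
   its edge from [l_11] to [l_0]; in that case [square_after_dodecagon] shows
   that no automorphism maps the base dodecagon onto [l]. *)
Lemma dodecagon_images :
  all (fun k => all (fun l => (size l == 12) ==>
    (has (fun me => l == map (dihedral me.1 me.2) dodecagon) dihedral_params ||
     ~~ has (fun q => (size q == 4) && (nth vdef q 1 == nth vdef l 0))
          (faces_from (nth vdef l 11))))
  (faces_from0 (ord14 k))) (iota 0 14).
Proof. by vm_compute. Qed.

Lemma aut_classification g : map_aut FK g ->
  exists a b m e, m < 6 /\ forall v, g v = shift a b (dihedral m e v).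
Proof.
move=> ha; set w := g (vxm 0 0 0).
have : map g dodecagon \in faces_from w := mem_faces_from (map_aut_face ha FK_dodecagon).
move=> /mapP [l hl el].
have hsz : size l = 12 by rewrite -(size_map (shift w.1.1 w.1.2)) -el size_map.
have gl i : i < 12 -> g (vxm 0 0 i) = shift w.1.1 w.1.2 (nth vdef l i).
  by move=> hi; rewrite -(nth_map vdef vdef) ?hsz // -el (nth_map vdef) ?size_map ?size_iota //
  (nth_map 0) ?size_iota // nth_iota.
have /allP/(_ w.2) := dodecagon_images; rewrite mem_iota ltn_ord ord14_val.
move=> /(_ isT)/allP/(_ l hl); rewrite hsz eqxx implyTb => /orP [/hasP [[m e] hme /eqP el2]|].
  exists w.1.1, w.1.2, m, e; split.
    by move: hme => /allpairsP [[m' e'] [hm' _ [-> _]]]; rewrite mem_iota in hm'.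
  apply: aut_eq_on_dodecagon ha (map_aut_comp (map_aut_shift _ _) (map_aut_dihedral m e)) _.
  by apply/eq_in_map; rewrite el el2 -map_comp.
move/negP; case; have /hasP [q' hq' /andP [hs4 /eqP hq1]] := square_after_dodecagon ha.
move: hq'; rewrite gl // faces_from_shift => /mapP [q hq eq].
have hq4 : size q = 4 by rewrite -(size_map (shift w.1.1 w.1.2)) -eq (eqP hs4).
apply/hasP; exists q; rewrite // hq4 eqxx /=.
by move: hq1; rewrite eq (nth_map vdef) ?hq4 // gl // => /(can_inj (shiftK _ _)) ->.
Qed.

(** * No reflections in orientable quotients *)

(* What an orientation of a quotient [K / Gamma] induces on [K]: one of the two
   orientations of every face is chosen, and chosen face cycles through the same
   directed edge have the same length. *)
Definition lifted_orientation (Q : seq VK -> Prop) : Prop :=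
  [/\ forall s, FK s -> (Q s \/ Q (rev s)) /\ ~ (Q s /\ Q (rev s)),
      forall s s' u v, Q s -> Q s' -> adj_in s u v -> adj_in s' u v -> size s = size s'
    & forall n s, Q (rot n s) -> Q s].

Lemma lifted_orientation_rev Q :
  lifted_orientation Q -> lifted_orientation (fun s => Q (rev s)).
Proof.
move=> [h1 h2 h3]; split.
- by move=> s /FK_rev /h1.
- move=> s s' u v o o' a a'; rewrite -size_rev -[size s']size_rev.
  exact: h2 o o' (adj_in_rev a) (adj_in_rev a').
- by move=> n s; rewrite rev_rot => /h3.
Qed.

Lemma orient_across_edge Q s t u v : lifted_orientation Q -> Q s -> FK t ->
  adj_in s u v -> adj_in t u v -> size s <> size t -> Q (rev t).
Proof.
move=> [h1 h2 _] hs ht a1 a2 hsz; have [[h|h] _] := h1 t ht => //.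
by case: hsz; apply: h2 a1 a2.
Qed.

Definition square_link (sq : seq VK) u0 v0 u1 v1 dx dy :=
  [&& sq \in faces_from (head vdef sq), adjacentb dodecagon u0 v0, adjacentb sq u0 v0,
      adjacentb (rev sq) u1 v1, adjacentb (rev (dodecagon_at dx dy)) u1 v1 & size sq == 4].

Lemma FK_dodecagon_at x y : FK (dodecagon_at x y).
Proof. exact: FK_shift FK_dodecagon. Qed.

Lemma orient_square_link Q sq u0 v0 u1 v1 dx dy : lifted_orientation Q ->
  square_link sq u0 v0 u1 v1 dx dy ->
  forall x y, Q (dodecagon_at x y) -> Q (dodecagon_at (x + dx) (y + dy)).
Proof.
move=> hQ /andP [hf /and5P [a1 a2 a3 a4 /eqP hs]] x y hD.
have hsq : FK (map (shift x y) sq).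
  by apply: FK_shift; move: hf; case: (sq) hs => // z r _; apply: faces_from_FK.
have hr : Q (rev (map (shift x y) sq)).
  apply: orient_across_edge hQ hD hsq (adj_in_map (shift x y) (adjacentb_adj_in a1))
    (adj_in_map (shift x y) (adjacentb_adj_in a2)) _.
  by rewrite !size_map hs.
rewrite -[dodecagon_at _ _]revK.
apply: orient_across_edge hQ hr (FK_rev (FK_dodecagon_at _ _)) _ _ _.
- by rewrite -map_rev; apply: adj_in_map (adjacentb_adj_in a3).
- by rewrite dodecagon_atD -map_rev; apply: adj_in_map (adjacentb_adj_in a4).
- by rewrite size_rev size_map hs size_rev size_map.
Qed.

Lemma square_links :
  [/\ square_link square0 (vxm 0 0 11) (vxm 0 0 0) (vxm 1 0 6) (vxm 1 0 5) 1 0,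
      square_link (map (shift (-1) 0) square0) (vxm 0 0 5) (vxm 0 0 6)
        (vxm (-1) 0 0) (vxm (-1) 0 11) (-1) 0,
      square_link [:: vxm 0 0 1; vxm 0 0 2; vxm 0 1 7; vxm 0 1 8]
        (vxm 0 0 1) (vxm 0 0 2) (vxm 0 1 8) (vxm 0 1 7) 0 1
    & square_link [:: vxm 0 (-1) 1; vxm 0 (-1) 2; vxm 0 0 7; vxm 0 0 8]
        (vxm 0 0 7) (vxm 0 0 8) (vxm 0 (-1) 2) (vxm 0 (-1) 1) 0 (-1)].
Proof. by split; vm_compute. Qed.

Lemma orient_dodecagon_translates Q : lifted_orientation Q -> Q dodecagon ->
  forall x y, Q (dodecagon_at x y).
Proof.
move=> hQ h0; have [c1 c2 c3 c4] := square_links.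
have hx : forall x, Q (dodecagon_at x 0).
  apply: Z_ind_pm; first by rewrite /dodecagon_at map_shift0.
    by move=> x /(orient_square_link hQ c1); rewrite Z.add_0_r.
  by move=> x /(orient_square_link hQ c2); rewrite Z.add_0_r.
move=> x; apply: Z_ind_pm => // y.
  by move=> /(orient_square_link hQ c3); rewrite Z.add_0_r.
by move=> /(orient_square_link hQ c4); rewrite Z.add_0_r.
Qed.

Lemma reflected_dodecagon m : m < 6 ->
  exists n, map (dihedral m true) dodecagon = rot n (rev dodecagon).
Proof.
have /allP h : all (fun m => has (fun n => map (dihedral m true) dodecagon == rot n (rev dodecagon))
  (iota 0 12)) (iota 0 6) by vm_compute.
move=> hm; have hm' : m \in iota 0 6 by rewrite mem_iota.
by have /hasP [n _ /eqP e] := h m hm'; exists n.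
Qed.

(* A reflection of [K] reverses the orientation of the translates of the base
   dodecagon, which a lifted orientation assigns consistently. *)
Lemma reflection_reverses_orientation Q g a b m : lifted_orientation Q ->
  (forall s, Q s -> Q (map g s)) -> m < 6 ->
  (forall v, g v = shift a b (dihedral m true v)) -> False.
Proof.
move=> hQ hg hm hgv.
have main Q' : lifted_orientation Q' -> (forall s, Q' s -> Q' (map g s)) ->
    Q' dodecagon -> False.
  move=> hQ' hg' h0; have [h1 _ h3] := hQ'; have [n e] := reflected_dodecagon hm.
  have hrev : Q' (rev (dodecagon_at a b)).
    apply: (h3 n); move: (hg' _ h0).
    by rewrite (eq_map hgv) map_comp e map_rot map_rev => h; exact: h.
  have [_ []] := h1 _ (FK_dodecagon_at a b); split => //.
  exact: orient_dodecagon_translates.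
have [h1 _ _] := hQ; have [[o|o] _] := h1 _ FK_dodecagon; first exact: main hQ hg o.
apply: main (lifted_orientation_rev hQ) _ o => s; rewrite -map_rev; exact: hg.
Qed.

Section Deck.
Variable Gamma : (VK -> VK) -> Prop.
Hypothesis deck : aut_subgroup Gamma.

Lemma deck_aut g : Gamma g -> map_aut FK g.
Proof. by case: deck => _ [h _] /h. Qed.

Lemma deck_comp g h : Gamma g -> Gamma h -> Gamma (g \o h).
Proof. by case: deck => _ [_ [h3 _]]; apply: h3. Qed.

Lemma deck_inv g : Gamma g -> exists h, Gamma h /\ cancel g h /\ cancel h g.
Proof. by case: deck => _ [_ [_ h4]]; apply: h4. Qed.

Lemma orbit_deck g v : Gamma g -> orbit Gamma (g v) = orbit Gamma v.
Proof.
move=> hg; apply: functional_extensionality => w; apply: propositional_extensionality.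
split; move=> [h [hh <-]].
  by exists (h \o g); split => //; apply: deck_comp.
have [gi [hgi [c1 _]]] := deck_inv hg.
by exists (h \o gi); split; [apply: deck_comp | rewrite /= c1].
Qed.

Lemma proj_eq u v : orbit Gamma u = orbit Gamma v -> proj Gamma u = proj Gamma v.
Proof.
rewrite /proj => e.
move: (ex_intro _ u (erefl (orbit Gamma u))) (ex_intro _ v (erefl (orbit Gamma v))).
by rewrite e => p1 p2; congr exist; apply: proof_irrelevance.
Qed.

Lemma proj_deck g v : Gamma g -> proj Gamma (g v) = proj Gamma v.
Proof. by move=> hg; apply/proj_eq/orbit_deck. Qed.

(* A face of [K] is positively oriented when its image in [X] is. *)
Lemma lift_orientation : orientable (FX Gamma) -> exists Q, lifted_orientation Q /\
  forall g, Gamma g -> forall s, Q s -> Q (map g s).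
Proof.
move=> [O [_ [hO2 [hO3 hO4]]]].
exists (fun s => FK s /\ O (map (proj Gamma) s)); split.
  split.
  - move=> s hs; have [oo no] := hO3 _ (ex_intro _ s (conj hs erefl)); split.
      case: oo => o; [by left | by right; rewrite map_rev; split => //; apply: FK_rev].
    by move=> [[_ o1] [_ o2]]; apply: no; rewrite -map_rev.
  - move=> s s' u v [_ o] [_ o'] a1 a2.
    have [n e] := hO4 _ _ _ _ o o' (adj_in_map (proj Gamma) a1) (adj_in_map (proj Gamma) a2).
    by rewrite -(size_map (proj Gamma) s) -(size_map (proj Gamma) s') e size_rot.
  - move=> n t [f o]; split.
      by rewrite -(rotK n t); apply: FK_rot.
    by rewrite -(rotK n (map _ t)); apply: hO2; rewrite -map_rot.
move=> g hg s [f o]; split; first exact: map_aut_face (deck_aut hg) f.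
by rewrite -map_comp (eq_map (fun v => proj_deck v hg)).
Qed.

Lemma deck_no_reflection g a b m : orientable (FX Gamma) -> Gamma g -> m < 6 ->
  (forall v, g v = shift a b (dihedral m true v)) -> False.
Proof.
move=> /lift_orientation [Q [hQ hinv]] hg.
exact: reflection_reverses_orientation hQ (hinv g hg).
Qed.

End Deck.

(** * No rotations in free quotients *)

Lemma Z_cases_mod3 x : exists t, (x = 3 * t \/ x = 3 * t + 1 \/ x = 3 * t + 2)%Z.
Proof.
have := Z.mod_pos_bound x 3 ltac:(lia); have := Z.div_mod x 3 ltac:(lia).
set t := (x / 3)%Z; set r := (x mod 3)%Z => hx hr; exists t.
by clearbody t r; lia.
Qed.

Lemma Z_cases_mod2 x : exists t, (x = 2 * t \/ x = 2 * t + 1)%Z.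
Proof.
have := Z.mod_pos_bound x 2 ltac:(lia); have := Z.div_mod x 2 ltac:(lia).
set t := (x / 2)%Z; set r := (x mod 2)%Z => hx hr; exists t.
by clearbody t r; lia.
Qed.

Definition rotation_stable (c d : Z) (m : nat) (f : seq VK) :=
  all (fun z => shift c d (iter m rho z) \in f) f.

Definition square1 : seq VK := [:: vxm 0 0 1; vxm 0 0 2; vxm 0 1 7; vxm 0 1 8].
Definition square2 : seq VK := [:: vxm 1 0 3; vxm 1 0 4; vxm 0 1 9; vxm 0 1 10].

Lemma FK_square1 : FK square1.
Proof. by apply: (@faces_from_FK (vxm 0 0 1)); vm_compute. Qed.

Lemma FK_square2 : FK square2.
Proof. by apply: (@faces_from_FK (vxm 1 0 3)); vm_compute. Qed.

Lemma rotation_stable_dodecagon m : m < 6 -> rotation_stable 0 0 m dodecagon.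
Proof.
have /allP h : all (fun m => rotation_stable 0 0 m dodecagon) (iota 0 6) by vm_compute.
by move=> hm; apply: h; rewrite mem_iota.
Qed.

Lemma rotation_stable_squares :
  [/\ rotation_stable 1 0 3 square0, rotation_stable 0 1 3 square1
    & rotation_stable 1 1 3 square2].
Proof. by split; vm_compute. Qed.

(* The [3^6] vertices are the fixed points of the rotations of order 3. *)
Lemma rotation_fixed_vertices :
  [&& shift 1 0 (iter 2 rho (vxm 0 0 12)) == vxm 0 0 12,
      shift 2 0 (iter 2 rho (vxm 0 0 13)) == vxm 0 0 13,
      shift 1 0 (iter 4 rho (vxm 0 (-1) 13)) == vxm 0 (-1) 13 &
      shift 2 0 (iter 4 rho (vxm 1 (-1) 12)) == vxm 1 (-1) 12].
Proof. by vm_compute. Qed.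

Section FreeAction.
Variable Gamma : (VK -> VK) -> Prop.
Hypothesis free : acts_freely Gamma.

Lemma rotation_neq_id g a b m : 0 < m < 6 ->
  (forall v, g v = shift a b (iter m rho v)) -> g <> id.
Proof.
have /allP h : all (fun m => (iter m rho (vxm 0 0 0)).2 != ord14 0) (iota 1 5) by vm_compute.
move=> hm hg e; have hm' : m \in iota 1 5 by rewrite mem_iota; lia.
move/negP: (h m hm'); apply.
by rewrite -[_.2]/((shift a b (iter m rho (vxm 0 0 0))).2) -hg e.
Qed.

(* [shift c d \o iter m rho] maps [f] into itself, and the lattice equations make
   [g] act on [map (shift p q) f] as that map acts on [f]. *)
Lemma rotation_fixes_no_face g a b m c d p q f : Gamma g ->
  (forall v, g v = shift a b (iter m rho v)) -> 0 < m < 6 ->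
  FK f -> rotation_stable c d m f ->
  ((iter m lattice_rot (p, q)).1 + a = c + p)%Z ->
  ((iter m lattice_rot (p, q)).2 + b = d + q)%Z -> False.
Proof.
move=> hG hg hm hf /allP hc e1 e2; apply: (rotation_neq_id hm hg).
case: free => _ [_ h3]; apply: (h3 g (map (shift p q) f) hG (FK_shift p q hf)).
move=> x /inP /mapP [z hz ->]; apply/inP.
by rewrite hg iter_rho_shift !shiftD e1 e2 -shiftD; apply/map_f/hc.
Qed.

Lemma rotation_fixes_no_vertex g a b m c d p q z : Gamma g ->
  (forall v, g v = shift a b (iter m rho v)) -> 0 < m < 6 ->
  shift c d (iter m rho z) == z ->
  ((iter m lattice_rot (p, q)).1 + a = c + p)%Z ->
  ((iter m lattice_rot (p, q)).2 + b = d + q)%Z -> False.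
Proof.
move=> hG hg hm /eqP hc e1 e2; apply: (rotation_neq_id hm hg).
case: free => h1 _; apply: (h1 g (shift p q z) hG).
by rewrite hg iter_rho_shift !shiftD e1 e2 -shiftD hc.
Qed.

(* Every rotation of [K] fixes a dodecagon, a square or a vertex; which one
   depends on the translation part modulo 3 or modulo 2. *)
Lemma deck_no_rotation g a b m : Gamma g -> 0 < m < 6 ->
  (forall v, g v = shift a b (iter m rho v)) -> False.
Proof.
move=> hG hm hg.
have [s1 s2 s3] := rotation_stable_squares.
have /and4P [v1 v2 v3 v4] := rotation_fixed_vertices.
have hface c d p q f := @rotation_fixes_no_face g a b m c d p q f hG hg hm.
have hvertex c d p q z := @rotation_fixes_no_vertex g a b m c d p q z hG hg hm.
have : m = 1 \/ m = 2 \/ m = 3 \/ m = 4 \/ m = 5 by lia.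
case=> [em|[em|[em|[em|em]]]]; subst m; cbn [iter lattice_rot fst snd] in hface, hvertex.
- by apply: (hface _ _ (- b)%Z (a + b)%Z _ FK_dodecagon (@rotation_stable_dodecagon 1 isT)); lia.
- have [t [e|[e|e]]] := Z_cases_mod3 (a - b).
  + by apply: (hface _ _ t (b + t)%Z _ FK_dodecagon (@rotation_stable_dodecagon 2 isT)); lia.
  + by apply: (hvertex _ _ t (b + t)%Z _ v1); lia.
  + by apply: (hvertex _ _ t (b + t)%Z _ v2); lia.
- have [p [ea|ea]] := Z_cases_mod2 a; have [q [eb|eb]] := Z_cases_mod2 b.
  + by apply: (hface _ _ p q _ FK_dodecagon (@rotation_stable_dodecagon 3 isT)); lia.
  + by apply: (hface _ _ p q _ FK_square1 s2); lia.
  + by apply: (hface _ _ p q _ FK_square0 s1); lia.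
  + by apply: (hface _ _ p q _ FK_square2 s3); lia.
- have [t [e|[e|e]]] := Z_cases_mod3 (a - b).
  + by apply: (hface _ _ (a - t)%Z (- t)%Z _ FK_dodecagon (@rotation_stable_dodecagon 4 isT)); lia.
  + by apply: (hvertex _ _ (a - 1 - t)%Z (- t)%Z _ v3); lia.
  + by apply: (hvertex _ _ (a - 2 - t)%Z (- t)%Z _ v4); lia.
- by apply: (hface _ _ (a + b)%Z (- a)%Z _ FK_dodecagon (@rotation_stable_dodecagon 5 isT)); lia.
Qed.

End FreeAction.

(** * Automorphisms of the quotient *)

Section Quotient.
Variable Gamma : (VK -> VK) -> Prop.
Hypothesis deck : aut_subgroup Gamma.

Definition normalizes (s : VK -> VK) :=
  forall g w, Gamma g -> exists2 g', Gamma g' & s (g w) = g' (s w).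

Definition rep (A : VX Gamma) : VK :=
  proj1_sig (constructive_indefinite_description _ (proj2_sig A)).

Lemma repK A : proj Gamma (rep A) = A.
Proof.
rewrite /rep; case: (constructive_indefinite_description _ _) => x /= hx.
by case: A hx => P hP /= hx; rewrite /proj; subst P; congr exist; apply: proof_irrelevance.
Qed.

Lemma proj_eq_deck u v : proj Gamma u = proj Gamma v -> exists2 g, Gamma g & g u = v.
Proof.
move/(congr1 (@proj1_sig _ _)) => /= e.
have : orbit Gamma v v by exists id; split => //; case: deck.
by rewrite -e => [[g []]]; exists g.
Qed.

Definition induced (s : VK -> VK) (A : VX Gamma) : VX Gamma := proj Gamma (s (rep A)).

Lemma induced_proj s v : normalizes s -> induced s (proj Gamma v) = proj Gamma (s v).
Proof.
move=> hn; rewrite /induced.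
have [g hg e] := proj_eq_deck (repK (proj Gamma v)).
have [g' hg' e'] := hn g (rep (proj Gamma v)) hg.
by rewrite -(proj_deck deck (s (rep (proj Gamma v))) hg') -e' e.
Qed.

Lemma FX_induced s t : map_aut FK s -> normalizes s ->
  FX Gamma t -> FX Gamma (map (induced s) t).
Proof.
move=> ha hn [u [hu ->]]; exists (map s u); split; first exact: map_aut_face ha hu.
by rewrite -!map_comp; apply: eq_map => v /=; apply: induced_proj.
Qed.

Lemma map_aut_induced s s' : map_aut FK s -> map_aut FK s' ->
  cancel s s' -> cancel s' s -> normalizes s -> normalizes s' ->
  map_aut (FX Gamma) (induced s).
Proof.
move=> ha ha' c1 c2 hn hn'.
have hK f f' : cancel f f' -> normalizes f -> normalizes f' -> cancel (induced f) (induced f').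
  by move=> c n n' A; rewrite -{1}(repK A) !induced_proj // c repK.
by apply: (map_aut_can (hK _ _ c1 hn hn') (hK _ _ c2 hn' hn)) => t; apply: FX_induced.
Qed.

End Quotient.

Definition shift_halfturn (c d : Z) (e : bool) (v : VK) : VK :=
  shift c d (if e then iter 3 rho v else v).

Definition shift_halfturn_inv (c d : Z) (e : bool) : VK -> VK :=
  if e then shift_halfturn c d true else shift_halfturn (- c) (- d) false.

Lemma halfturn_shift x y v : iter 3 rho (shift x y v) = shift (- x) (- y) (iter 3 rho v).
Proof. by rewrite iter_rho_shift /=; congr shift; lia. Qed.

Lemma map_aut_shift_halfturn c d e : map_aut FK (shift_halfturn c d e).
Proof.
apply: (@map_aut_comp _ _ (shift c d)); first exact: map_aut_shift.
by case: e; [apply: map_aut_iter map_aut_rho | apply: map_aut_id].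
Qed.

Lemma shift_halfturnK c d e : cancel (shift_halfturn c d e) (shift_halfturn_inv c d e).
Proof.
case: e => v; rewrite /shift_halfturn_inv /shift_halfturn; last exact: shiftK.
by rewrite halfturn_shift shiftD -iterD rho6 -[RHS]shift0; congr shift; lia.
Qed.

Lemma shift_halfturn_invK c d e : cancel (shift_halfturn_inv c d e) (shift_halfturn c d e).
Proof.
case: e => v; rewrite /shift_halfturn_inv /shift_halfturn; last exact: shiftNK.
by rewrite halfturn_shift shiftD -iterD rho6 -[RHS]shift0; congr shift; lia.
Qed.

Definition halfturn_params : seq (Z * Z * bool) := [:: (0, 0, false); (0, 0, true); (1, 1, true)]%Z.

Lemma shift_halfturn_reps :
  all (fun k => has (fun t => shift_halfturn t.2.1.1 t.2.1.2 t.2.2 (vxm 0 0 t.1) == vxm 0 0 k)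
    [seq (j, p) | j <- [:: 0; 1; 2; 3; 4; 5; 12], p <- halfturn_params]) (iota 0 14).
Proof. by vm_compute. Qed.

Lemma vertex_halfturn_reps v : exists j c d e,
  j \in [:: 0; 1; 2; 3; 4; 5; 12] /\ shift_halfturn c d e (vxm 0 0 j) = v.
Proof.
have /allP/(_ v.2) := shift_halfturn_reps; rewrite mem_iota ltn_ord => /(_ isT).
case/hasP=> _ /allpairsP [[j p] [hj _ ->]] /= /eqP he.
exists j, (p.1.1 + v.1.1)%Z, (p.1.2 + v.1.2)%Z, p.2; split => //.
by rewrite [RHS]vertex_decomp -he /shift_halfturn shiftD.
Qed.

Section TorusQuotient.
Variable Gamma : (VK -> VK) -> Prop.
Hypotheses (deck : aut_subgroup Gamma) (free : acts_freely Gamma).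
Hypothesis orient : orientable (FX Gamma).

Lemma deck_translation g : Gamma g -> exists a b, forall v, g v = shift a b v.
Proof.
move=> hg; have [a [b [m [e [hm hgv]]]]] := aut_classification (deck_aut deck hg).
case: e hgv => hgv; first by case: (deck_no_reflection deck orient hg hm hgv).
case: m hm hgv => [|m] hm hgv; first by exists a, b.
by case: (deck_no_rotation free hg (_ : 0 < m.+1 < 6) hgv).
Qed.

(* The half-turn [iter 3 rho] conjugates each translation to its inverse. *)
Lemma normalizes_shift_halfturn c d e : normalizes Gamma (shift_halfturn c d e).
Proof.
move=> g w hg; have [a [b hab]] := deck_translation hg.
case: e; last by exists g => //; rewrite /shift_halfturn !hab !shiftD; congr shift; lia.
have [h [hh [c1 _]]] := deck_inv deck hg.
have hi u : h u = shift (- a) (- b) u by rewrite -{1}(shiftNK a b u) -hab c1.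
by exists h => //; rewrite hi /shift_halfturn hab halfturn_shift !shiftD; congr shift; lia.
Qed.

Lemma map_aut_induced_halfturn c d e :
  map_aut (FX Gamma) (induced (shift_halfturn c d e)).
Proof.
apply: (map_aut_induced deck _ _ (shift_halfturnK c d e) (shift_halfturn_invK c d e)).
- exact: map_aut_shift_halfturn.
- by case: e; apply: map_aut_shift_halfturn.
- exact: normalizes_shift_halfturn.
- by case: e; apply: normalizes_shift_halfturn.
Qed.

End TorusQuotient.

Theorem theorem1 (Gamma : (VK -> VK) -> Prop) :
  aut_subgroup Gamma ->
  acts_freely Gamma ->
  polyhedral (FX Gamma) ->
  torus_map (FX Gamma) ->
  exists reps : seq (VX Gamma),
    size reps <= 7 /\
    forall x : VX Gamma, exists y, List.In y reps /\
      exists phi, map_aut (FX Gamma) phi /\ phi y = x.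
Proof.
move=> deck free _ [orient _].
exists [seq proj Gamma (vxm 0 0 j) | j <- [:: 0; 1; 2; 3; 4; 5; 12]]; split => // x.
have [j [c [d [e [hj he]]]]] := vertex_halfturn_reps (rep x).
exists (proj Gamma (vxm 0 0 j)); split.
  by apply: (List.in_map _ [:: 0; 1; 2; 3; 4; 5; 12]); apply/inP.
exists (induced (shift_halfturn c d e)); split.
  exact: map_aut_induced_halfturn.
by rewrite induced_proj ?he ?repK //; apply: normalizes_shift_halfturn.
Qed.
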